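(* Let $D=\{(x,y)\in\mathbb{R}^2 \mid x+y\neq 1\}$ and $f(x,y)=(x+y)e^{-x}$. The 3-web on $D$ formed by the three foliations whose leaves are the level curves $x=\text{const}$, $y=\text{const}$ and $f(x,y)=\text{const}$ is linearizable: near every point of $D$ there is a local diffeomorphism onto an open subset of $\mathbb{R}^2$ carrying the leaves of all three foliations onto (open pieces of) straight lines.
   Context: A 3-web on a 2-dimensional manifold is given by three foliations by smooth curves in general position (pairwise transversal). A 3-web is linear if all three foliations consist of straight lines; it is linearizable if it is locally equivalent to a linear web via a local diffeomorphism. *)

From Stdlib Require Import Reals.
Open Scope R_scope.

Definition R2 := (R * R)%type.

(* Open subsets of R^2 (product / max-norm topology = Euclidean topology). *)
Definition open2 (U : R2 -> Prop) : Prop :=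
  forall p, U p -> exists r, 0 < r /\
    forall q, Rabs (fst q - fst p) < r -> Rabs (snd q - snd p) < r -> U q.

Definition cont_on (U : R2 -> Prop) (g : R2 -> R) : Prop :=
  forall p, U p -> forall eps, 0 < eps -> exists delta, 0 < delta /\
    forall q, U q -> Rabs (fst q - fst p) < delta -> Rabs (snd q - snd p) < delta ->
      Rabs (g q - g p) < eps.

Fixpoint Ck (k : nat) (U : R2 -> Prop) (g : R2 -> R) : Prop :=
  match k with
  | O => cont_on U g
  | S k' => cont_on U g /\
      exists g1 g2 : R2 -> R,
        (forall p, U p ->
           derivable_pt_lim (fun t => g (t, snd p)) (fst p) (g1 p) /\
           derivable_pt_lim (fun t => g (fst p, t)) (snd p) (g2 p)) /\
        Ck k' U g1 /\ Ck k' U g2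
  end.

Definition smooth_on (U : R2 -> Prop) (g : R2 -> R) : Prop := forall k, Ck k U g.

Definition smooth_map_on (U : R2 -> Prop) (F : R2 -> R2) : Prop :=
  smooth_on U (fun p => fst (F p)) /\ smooth_on U (fun p => snd (F p)).

Definition diffeo (U V : R2 -> Prop) (phi psi : R2 -> R2) : Prop :=
  open2 U /\ open2 V /\
  (forall p, U p -> V (phi p)) /\ (forall q, V q -> U (psi q)) /\
  (forall p, U p -> psi (phi p) = p) /\ (forall q, V q -> phi (psi q) = q) /\
  smooth_map_on U phi /\ smooth_map_on V psi.

Definition on_a_line (S : R2 -> Prop) : Prop :=
  exists a b c, (a <> 0 \/ b <> 0) /\
    forall q, S q -> a * fst q + b * snd q = c.

Definition D (p : R2) : Prop := fst p + snd p <> 1.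
Definition f (p : R2) : R := (fst p + snd p) * exp (- fst p).

(* The three first integrals of the web: leaves are level curves of these. *)
Definition web_integrals : list (R2 -> R) := (fun p => fst p) :: (fun p => snd p) :: f :: nil.

Definition linearizable_near (p0 : R2) : Prop :=
  exists (U V : R2 -> Prop) (phi psi : R2 -> R2),
    U p0 /\ (forall p, U p -> D p) /\ diffeo U V phi psi /\
    forall g, List.In g web_integrals -> forall c,
      on_a_line (fun q => exists p, U p /\ g p = c /\ q = phi p).

(* The map (x, y) |-> (f(x, y), y) sends the leaves y = c and f = c to
   horizontal and vertical lines, and, f being affine in y, the leaf x = c to
   the line u = e^{-c} (c + v).  It is a local diffeomorphism off x + y = 1:
   f(x, y) e^{-y} = s e^{-s} with s = x + y, and s |-> s e^{-s} has derivative
   (1 - s) e^{-s}, so it has a local inverse k near every s <> 1, and the inverse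
   map is (u, v) |-> (k(u e^{-v}) - v, v).  Smoothness of both maps follows
   because their components lie in an algebra generated by finitely many
   continuous functions whose partial derivatives stay in the algebra; for the
   inverse this works since k' = e^k / (1 - k). *)

From Stdlib Require Import Reals Lra Ranalysis5 FunctionalExtensionality.
From Coquelicot Require Import Coquelicot.
Open Scope R_scope.

Lemma continuous_fst_R2 (p : R2) : continuous (fun q : R2 => fst q) p.
Proof. destruct p; apply continuous_fst. Qed.
Lemma continuous_snd_R2 (p : R2) : continuous (fun q : R2 => snd q) p.
Proof. destruct p; apply continuous_snd. Qed.

Lemma continuous_comp_derivable (g : R2 -> R) (phi : R -> R) (p : R2) (l : R) :
  continuous g p -> derivable_pt_lim phi (g p) l -> continuous (fun q => phi (g q)) p.
Proof.
  intros Hg Hphi. apply continuous_comp; [exact Hg|].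
  apply continuity_pt_filterlim, derivable_continuous_pt. exists l; exact Hphi.
Qed.

Lemma continuous_eps_delta (g : R2 -> R) (p : R2) : continuous g p ->
  forall eps, 0 < eps -> exists delta, 0 < delta /\
    forall q, Rabs (fst q - fst p) < delta -> Rabs (snd q - snd p) < delta ->
      Rabs (g q - g p) < eps.
Proof.
  intros Hg eps Heps.
  destruct (proj1 (filterlim_locally _ _) Hg (mkposreal eps Heps)) as [[d Hd] Hball].
  exists d; split; [exact Hd|]. intros q Hx Hy. exact (Hball q (conj Hx Hy)).
Qed.

Lemma continuous_cont_on (U : R2 -> Prop) (g : R2 -> R) :
  (forall p, U p -> continuous g p) -> cont_on U g.
Proof.
  intros Hg p Up eps Heps.
  destruct (continuous_eps_delta g p (Hg p Up) eps Heps) as [d [Hd Hq]].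
  exists d; split; [exact Hd|]. intros q _. apply Hq.
Qed.

Lemma open2_preimage_interval (g : R2 -> R) (lo hi : R) :
  (forall p, continuous g p) -> open2 (fun p => lo < g p < hi).
Proof.
  intros Hg p Hp.
  destruct (continuous_eps_delta g p (Hg p) (Rmin (g p - lo) (hi - g p))) as [d [Hd Hq]].
  { apply Rmin_pos; lra. }
  exists d; split; [exact Hd|]. intros q Hx Hy.
  specialize (Hq q Hx Hy). apply Rabs_def2 in Hq.
  pose proof (Rmin_l (g p - lo) (hi - g p)). pose proof (Rmin_r (g p - lo) (hi - g p)). lra.
Qed.

Definition has_partials (U : R2 -> Prop) (g g1 g2 : R2 -> R) : Prop :=
  forall p, U p ->
    derivable_pt_lim (fun t => g (t, snd p)) (fst p) (g1 p) /\
    derivable_pt_lim (fun t => g (fst p, t)) (snd p) (g2 p).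

Lemma has_partials_comp (U : R2 -> Prop) (phi phi' : R -> R) (g g1 g2 : R2 -> R) :
  has_partials U g g1 g2 ->
  (forall p, U p -> derivable_pt_lim phi (g p) (phi' (g p))) ->
  has_partials U (fun p => phi (g p)) (fun p => phi' (g p) * g1 p) (fun p => phi' (g p) * g2 p).
Proof.
  intros Hg Hphi [x y] Up. destruct (Hg _ Up) as [Hx Hy]. simpl in *. split.
  - exact (derivable_pt_lim_comp _ phi x _ _ Hx (Hphi _ Up)).
  - exact (derivable_pt_lim_comp _ phi y _ _ Hy (Hphi _ Up)).
Qed.

Section GeneratedAlgebra.
Variables (U : R2 -> Prop) (atom : (R2 -> R) -> Prop).

Inductive in_algebra : (R2 -> R) -> Prop :=
| in_algebra_atom a : atom a -> in_algebra a
| in_algebra_cst c : in_algebra (fun _ => c)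
| in_algebra_add g h : in_algebra g -> in_algebra h -> in_algebra (fun p => g p + h p)
| in_algebra_mul g h : in_algebra g -> in_algebra h -> in_algebra (fun p => g p * h p).

Lemma in_algebra_ext (g g' : R2 -> R) :
  in_algebra g -> (forall p, g p = g' p) -> in_algebra g'.
Proof. intros Hg E. replace g' with g by (apply functional_extensionality, E). exact Hg. Qed.

Definition C1_in_algebra (g : R2 -> R) : Prop :=
  (forall p, U p -> continuous g p) /\
  exists g1 g2, has_partials U g g1 g2 /\ in_algebra g1 /\ in_algebra g2.

Hypothesis atom_C1 : forall a, atom a -> C1_in_algebra a.

Lemma in_algebra_C1 (g : R2 -> R) : in_algebra g -> C1_in_algebra g.
Proof.
  induction 1 as [a Ha | c
    | g h _ [Cg (g1 & g2 & Pg & G1 & G2)] _ [Ch (h1 & h2 & Ph & H1 & H2)]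
    | g h Gg [Cg (g1 & g2 & Pg & G1 & G2)] Gh [Ch (h1 & h2 & Ph & H1 & H2)]].
  - exact (atom_C1 a Ha).
  - split; [intros; apply continuous_const|].
    exists (fun _ => 0), (fun _ => 0).
    split; [intros p _; split; apply derivable_pt_lim_const | split; apply in_algebra_cst].
  - split; [intros p Up; exact (continuous_plus g h p (Cg p Up) (Ch p Up))|].
    exists (fun p => g1 p + h1 p), (fun p => g2 p + h2 p).
    split; [|split; apply in_algebra_add; assumption].
    intros p Up. destruct (Pg p Up), (Ph p Up).
    split; apply derivable_pt_lim_plus; assumption.
  - split; [intros p Up; exact (continuous_mult g h p (Cg p Up) (Ch p Up))|].
    exists (fun p => g1 p * h p + g p * h1 p), (fun p => g2 p * h p + g p * h2 p).
    split; [|split; apply in_algebra_add; apply in_algebra_mul; assumption].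
    intros [x y] Up. destruct (Pg _ Up) as [Gx Gy], (Ph _ Up) as [Hx Hy]. simpl in *.
    split; [exact (derivable_pt_lim_mult _ _ _ _ _ Gx Hx)
           | exact (derivable_pt_lim_mult _ _ _ _ _ Gy Hy)].
Qed.

Lemma in_algebra_Ck (k : nat) : forall g, in_algebra g -> Ck k U g.
Proof.
  induction k as [|k IH]; intros g Hg;
    destruct (in_algebra_C1 g Hg) as [Cg (g1 & g2 & Pg & G1 & G2)].
  - exact (continuous_cont_on U g Cg).
  - split; [exact (continuous_cont_on U g Cg)|].
    exists g1, g2. split; [exact Pg | split; apply IH; assumption].
Qed.

Lemma in_algebra_smooth (g : R2 -> R) : in_algebra g -> smooth_on U g.
Proof. intros Hg k. exact (in_algebra_Ck k g Hg). Qed.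

End GeneratedAlgebra.

Ltac solve_in_algebra :=
  repeat first
    [ apply in_algebra_cst
    | apply in_algebra_atom; solve [hnf; simpl; auto 10]
    | apply in_algebra_mul
    | apply in_algebra_add ].

Ltac solve_derive := apply is_derive_Reals; simpl; auto_derive; auto; ring.

Lemma fst_C1 (U : R2 -> Prop) (atom : (R2 -> R) -> Prop) :
  C1_in_algebra U atom (fun p => fst p).
Proof.
  split; [intros p _; apply continuous_fst_R2|].
  exists (fun _ => 1), (fun _ => 0).
  split; [intros p _; split; solve_derive | split; apply in_algebra_cst].
Qed.

Lemma snd_C1 (U : R2 -> Prop) (atom : (R2 -> R) -> Prop) :
  C1_in_algebra U atom (fun p => snd p).
Proof.
  split; [intros p _; apply continuous_snd_R2|].
  exists (fun _ => 0), (fun _ => 1).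
  split; [intros p _; split; solve_derive | split; apply in_algebra_cst].
Qed.

Lemma exp_opp_fst_C1 (U : R2 -> Prop) (atom : (R2 -> R) -> Prop) :
  atom (fun p => exp (- fst p)) -> C1_in_algebra U atom (fun p => exp (- fst p)).
Proof.
  intros Ha. split.
  - intros p _. apply (continuous_comp_derivable (fun q => fst q) (fun t => exp (- t)) p (- exp (- fst p))).
    + apply continuous_fst_R2.
    + solve_derive.
  - exists (fun p => -1 * exp (- fst p)), (fun _ => 0).
    split; [intros p _; split; solve_derive | split; solve_in_algebra].
Qed.

Lemma exp_opp_snd_C1 (U : R2 -> Prop) (atom : (R2 -> R) -> Prop) :
  atom (fun p => exp (- snd p)) -> C1_in_algebra U atom (fun p => exp (- snd p)).
Proof.
  intros Ha. split.
  - intros p _. apply (continuous_comp_derivable (fun q => snd q) (fun t => exp (- t)) p (- exp (- snd p))).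
    + apply continuous_snd_R2.
    + solve_derive.
  - exists (fun _ => 0), (fun p => -1 * exp (- snd p)).
    split; [intros p _; split; solve_derive | split; solve_in_algebra].
Qed.

Section MonotoneInverse.
Variables (F F' : R -> R) (a b : R).
Hypothesis a_lt_b : a < b.
Hypothesis F_deriv : forall s, derivable_pt_lim F s (F' s).
Hypothesis F'_pos : forall s, a <= s <= b -> 0 < F' s.

Lemma pos_derive_incr (x y : R) : a <= x <= b -> a <= y <= b -> x < y -> F x < F y.
Proof.
  apply (derive_increasing_interv a b F (fun s => exist _ (F' s) (F_deriv s)) a_lt_b).
  intros t Ht. apply F'_pos. lra.
Qed.

Lemma pos_derive_le (x y : R) : a <= x <= b -> a <= y <= b -> x <= y -> F x <= F y.
Proof.
  intros Hx Hy [Lt | ->]; [apply Rlt_le, pos_derive_incr|]; auto with real.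
Qed.

Lemma pos_derive_inj (x y : R) : a <= x <= b -> a <= y <= b -> F x = F y -> x = y.
Proof.
  intros Hx Hy E. destruct (Rtotal_order x y) as [L | [L | L]]; [| exact L |].
  - pose proof (pos_derive_incr x y Hx Hy L). lra.
  - pose proof (pos_derive_incr y x Hy Hx L). lra.
Qed.

Lemma pos_derive_section : exists g : R -> R,
  forall w, F a <= w <= F b -> a <= g w <= b /\ F (g w) = w.
Proof.
  assert (preimage : forall w, {s | F a <= w <= F b -> a <= s <= b /\ F s = w}).
  { intros w. destruct (Rle_dec (F a) w) as [H1 | H1]; [destruct (Rle_dec w (F b)) as [H2 | H2]|].
    - assert (F_cont : forall s, a <= s <= b -> continuity_pt F s).
      { intros s _. apply derivable_continuous_pt. exists (F' s). apply F_deriv. }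
      destruct (f_interv_is_interv F a b w a_lt_b (conj H1 H2) F_cont) as [s Hs].
      exists s. intros _. exact Hs.
    - exists a. lra.
    - exists a. lra. }
  exists (fun w => proj1_sig (preimage w)). intros w. exact (proj2_sig (preimage w)).
Qed.

Lemma pos_derive_inverse : exists g : R -> R,
  (forall w, F a < w < F b -> a < g w < b /\ F (g w) = w) /\
  (forall s, a <= s <= b -> g (F s) = s) /\
  (forall w, F a < w < F b -> derivable_pt_lim g w (/ F' (g w))).
Proof.
  destruct pos_derive_section as [g g_range].
  assert (g_F : forall s, a <= s <= b -> g (F s) = s).
  { intros s Hs. apply pos_derive_inj; [| exact Hs |]; apply g_range;
      split; apply pos_derive_le; lra. }
  assert (g_open : forall w, F a < w < F b -> a < g w < b).
  { intros w Hw. destruct (g_range w) as [[Ha Hb] Hgw]; [lra|].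
    split; [destruct Ha as [Ha | Ha] | destruct Hb as [Hb | Hb]];
      [exact Ha | rewrite <- Ha in Hgw; lra | exact Hb | rewrite Hb in Hgw; lra]. }
  exists g. split; [|split; [exact g_F|]].
  { intros w Hw. split; [apply g_open, Hw | apply g_range; lra]. }
  intros w Hw.
  assert (g_cont : continuity_pt g w).
  { apply (continuity_pt_recip_interv F g a b a_lt_b).
    - intros x y Hx Hxy Hy. apply pos_derive_incr; lra.
    - intros x Hx1 Hx2. unfold comp, id. apply g_range; lra.
    - intros x Hx1 Hx2. apply g_range; lra.
    - intros s _. apply derivable_continuous_pt. exists (F' s). apply F_deriv.
    - exact Hw. }
  assert (g_bounds : g (F a) <= g w <= g (F b)).
  { rewrite !g_F by lra. pose proof (g_open w Hw). lra. }
  pose proof (derivable_pt_lim_recip_interv F g (F a) (F b) w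
    (fun s _ => exist _ (F' s) (F_deriv s)) g_cont ltac:(lra) Hw g_bounds
    ltac:(intros x Hx; unfold comp, id; apply g_range; lra)) as Hder.
  simpl in Hder.
  assert (F'_gw : F' (g w) <> 0) by (apply Rgt_not_eq, F'_pos; pose proof (g_open w Hw); lra).
  specialize (Hder F'_gw). unfold Rdiv in Hder. rewrite Rmult_1_l in Hder. exact Hder.
Qed.

End MonotoneInverse.

Lemma sign_scaled_interval (sg lo hi w : R) : sg = 1 \/ sg = -1 -> lo < hi ->
  (Rmin (sg * lo) (sg * hi) < w < Rmax (sg * lo) (sg * hi) <-> lo < sg * w < hi).
Proof.
  intros [-> | ->] Hlh; unfold Rmin, Rmax;
    destruct (Rle_dec _ _); split; intros; lra.
Qed.

Lemma one_minus_sign_near (s0 : R) : s0 <> 1 ->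
  exists sg dl, (sg = 1 \/ sg = -1) /\ 0 < dl /\
    forall s, s0 - dl <= s <= s0 + dl -> 0 < sg * (1 - s).
Proof.
  intros Hs0. exists (if Rlt_dec s0 1 then 1 else -1), (Rabs (s0 - 1) / 2).
  assert (Hdist : 0 < Rabs (s0 - 1)) by (apply Rabs_pos_lt; lra).
  destruct (Rlt_dec s0 1); (split; [auto | split; [lra |]]).
  - rewrite Rabs_left by lra. intros s Hs. lra.
  - rewrite Rabs_right by lra. intros s Hs. lra.
Qed.

Lemma sexp_local_inverse (s0 : R) : s0 <> 1 ->
  exists a b c d (k : R -> R),
    a < s0 < b /\ (forall s, a < s < b -> s <> 1) /\
    (forall s, a < s < b -> c < s * exp (- s) < d) /\
    (forall w, c < w < d -> a < k w < b /\ k w * exp (- k w) = w) /\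
    (forall s, a < s < b -> k (s * exp (- s)) = s) /\
    (forall w, c < w < d -> derivable_pt_lim k w (exp (k w) * / (1 - k w))).
Proof.
  intros Hs0.
  destruct (one_minus_sign_near s0 Hs0) as (sg & dl & Hsg & Hdl & Hside).
  assert (Hsg0 : sg <> 0) by (destruct Hsg; lra).
  set (a := s0 - dl) in *. set (b := s0 + dl) in *.
  assert (Hab : a < b) by (unfold a, b; lra).
  (* Multiplying by [sg] makes [s * exp (- s)] increasing near [s0]. *)
  set (F := fun s => sg * (s * exp (- s))).
  set (F' := fun s => sg * ((1 - s) * exp (- s))).
  assert (F_deriv : forall s, derivable_pt_lim F s (F' s)).
  { intros s. apply is_derive_Reals. unfold F, F'. auto_derive; auto. ring. }
  assert (F'_pos : forall s, a <= s <= b -> 0 < F' s).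
  { intros s Hs. unfold F'. rewrite <- Rmult_assoc.
    apply Rmult_lt_0_compat; [apply Hside, Hs | apply exp_pos]. }
  destruct (pos_derive_inverse F F' a b Hab F_deriv F'_pos) as (g & Hg & HgF & Hgd).
  assert (Hrange : forall s, a < s < b -> F a < F s < F b).
  { intros s Hs. split; apply (pos_derive_incr F F' a b Hab F_deriv F'_pos); lra. }
  assert (Fab : F a < F b) by (apply (pos_derive_incr F F' a b Hab F_deriv F'_pos); lra).
  assert (Hint := fun w => sign_scaled_interval sg (F a) (F b) w Hsg Fab).
  exists a, b, (Rmin (sg * F a) (sg * F b)), (Rmax (sg * F a) (sg * F b)), (fun w => g (sg * w)).
  split; [unfold a, b; lra|]. split; [|split; [|split; [|split]]].
  - intros s Hs ->. pose proof (Hside 1 ltac:(lra)). lra.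
  - intros s Hs. apply Hint. exact (Hrange s Hs).
  - intros w Hw. apply Hint in Hw. destruct (Hg _ Hw) as [Hgw HFgw].
    split; [exact Hgw|]. exact (Rmult_eq_reg_l sg _ _ HFgw Hsg0).
  - intros s Hs. exact (HgF s ltac:(lra)).
  - intros w Hw. apply Hint in Hw.
    pose proof (Hg _ Hw) as [Hgw _].
    assert (Hne1 : 1 - g (sg * w) <> 0).
    { intros E. pose proof (Hside (g (sg * w)) ltac:(lra)) as Hpos.
      rewrite E, Rmult_0_r in Hpos. lra. }
    assert (Hexp : exp (g (sg * w)) <> 0) by apply Rgt_not_eq, exp_pos.
    assert (Hlin : derivable_pt_lim (fun t => sg * t) w sg).
    { apply is_derive_Reals. auto_derive; auto. ring. }
    replace (exp (g (sg * w)) * / (1 - g (sg * w))) with (/ F' (g (sg * w)) * sg).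
    + exact (derivable_pt_lim_comp _ g w _ _ Hlin (Hgd _ Hw)).
    + unfold F'. rewrite exp_Ropp. field. auto.
Qed.

Definition straighten (p : R2) : R2 := (f p, snd p).

Lemma straighten_smooth (U : R2 -> Prop) : smooth_map_on U straighten.
Proof.
  set (atom := fun g : R2 -> R =>
    List.In g ((fun p => fst p) :: (fun p => snd p) :: (fun p => exp (- fst p)) :: nil)).
  assert (Hatom : forall a, atom a -> C1_in_algebra U atom a).
  { intros a [<- | [<- | [<- | []]]].
    - apply fst_C1.
    - apply snd_C1.
    - apply exp_opp_fst_C1. hnf; simpl; auto. }
  split; apply (in_algebra_smooth U atom Hatom); unfold straighten, f; simpl; solve_in_algebra.
Qed.

Lemma straighten_leaves_on_lines (U : R2 -> Prop) :
  forall g, List.In g web_integrals -> forall c,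
    on_a_line (fun q => exists p, U p /\ g p = c /\ q = straighten p).
Proof.
  intros g Hg c. simpl in Hg. destruct Hg as [<- | [<- | [<- | []]]].
  - exists 1, (- exp (- c)), (c * exp (- c)). split; [left; lra|].
    intros q (p & _ & Hc & ->). unfold straighten, f; simpl. rewrite Hc. ring.
  - exists 0, 1, c. split; [right; lra|].
    intros q (p & _ & Hc & ->). simpl. rewrite Hc. ring.
  - exists 1, 0, c. split; [left; lra|].
    intros q (p & _ & Hc & ->). simpl. rewrite Hc. ring.
Qed.

Definition wexp (q : R2) : R := fst q * exp (- snd q).

Lemma continuous_wexp (p : R2) : continuous wexp p.
Proof.
  apply (continuous_mult (fun q : R2 => fst q) (fun q => exp (- snd q))).
  - apply continuous_fst_R2.
  - apply (continuous_comp_derivable (fun q => - snd q) exp p (exp (- snd p))).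
    + apply (continuous_opp (fun q : R2 => snd q)), continuous_snd_R2.
    + apply derivable_pt_lim_exp.
Qed.

Definition unstraighten (k : R -> R) (q : R2) : R2 := (k (wexp q) - snd q, snd q).

Lemma wexp_partials (U : R2 -> Prop) :
  has_partials U wexp (fun q => exp (- snd q)) (fun q => -1 * (fst q * exp (- snd q))).
Proof. intros p _. unfold wexp. split; solve_derive. Qed.

Lemma derivable_pt_lim_inv_one_minus (z : R) :
  z <> 1 -> derivable_pt_lim (fun t => / (1 - t)) z (/ (1 - z) * / (1 - z)).
Proof. intros Hz. apply is_derive_Reals. auto_derive; [lra|]. field. lra. Qed.

Section Unstraighten.
Variables (V : R2 -> Prop) (k : R -> R).
Hypothesis k_ne1 : forall q, V q -> k (wexp q) <> 1.
Hypothesis k_deriv : forall q, V q ->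
  derivable_pt_lim k (wexp q) (exp (k (wexp q)) * / (1 - k (wexp q))).

Let h (q : R2) : R := k (wexp q).

Let atom (g : R2 -> R) : Prop :=
  List.In g ((fun q => fst q) :: (fun q => snd q) :: (fun q => exp (- snd q)) ::
             h :: (fun q => exp (h q)) :: (fun q => / (1 - h q)) :: nil).

Lemma h_partials : has_partials V h
  (fun q => exp (h q) * / (1 - h q) * exp (- snd q))
  (fun q => exp (h q) * / (1 - h q) * (-1 * (fst q * exp (- snd q)))).
Proof.
  exact (has_partials_comp V k (fun w => exp (k w) * / (1 - k w)) wexp _ _
           (wexp_partials V) k_deriv).
Qed.

Lemma continuous_h (q : R2) : V q -> continuous h q.
Proof. intros Vq. exact (continuous_comp_derivable wexp k q _ (continuous_wexp q) (k_deriv q Vq)). Qed.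

Lemma h_C1 : C1_in_algebra V atom h.
Proof.
  split; [exact continuous_h|].
  eexists _, _. split; [exact h_partials | split; solve_in_algebra].
Qed.

Lemma comp_h_C1 (phi phi' : R -> R) :
  (forall q, V q -> derivable_pt_lim phi (h q) (phi' (h q))) ->
  in_algebra atom (fun q => phi' (h q)) ->
  C1_in_algebra V atom (fun q => phi (h q)).
Proof.
  intros Hphi Hphi'. split.
  - intros q Vq. exact (continuous_comp_derivable h phi q _ (continuous_h q Vq) (Hphi q Vq)).
  - eexists _, _. split; [exact (has_partials_comp V phi phi' h _ _ h_partials Hphi)|].
    split; apply in_algebra_mul; solve [assumption | solve_in_algebra].
Qed.

Lemma unstraighten_smooth : smooth_map_on V (unstraighten k).
Proof.
  assert (Hatom : forall a, atom a -> C1_in_algebra V atom a).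
  { intros a [<- | [<- | [<- | [<- | [<- | [<- | []]]]]]].
    - apply fst_C1.
    - apply snd_C1.
    - apply exp_opp_snd_C1. hnf; simpl; auto 10.
    - exact h_C1.
    - apply (comp_h_C1 exp exp); [intros; apply derivable_pt_lim_exp | solve_in_algebra].
    - apply (comp_h_C1 (fun z => / (1 - z)) (fun z => / (1 - z) * / (1 - z))).
      + intros q Vq. apply derivable_pt_lim_inv_one_minus, k_ne1, Vq.
      + solve_in_algebra. }
  split; apply (in_algebra_smooth V atom Hatom).
  - apply (in_algebra_ext atom (fun q => h q + -1 * snd q)); [solve_in_algebra|].
    intros q. unfold unstraighten, h; simpl. ring.
  - solve_in_algebra.
Qed.

End Unstraighten.

Lemma wexp_straighten (p : R2) :
  wexp (straighten p) = (fst p + snd p) * exp (- (fst p + snd p)).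
Proof. unfold wexp, straighten, f; simpl. rewrite Ropp_plus_distr, exp_plus. ring. Qed.

Lemma unstraighten_straighten (k : R -> R) (p : R2) :
  k ((fst p + snd p) * exp (- (fst p + snd p))) = fst p + snd p ->
  unstraighten k (straighten p) = p.
Proof.
  intros Hk. destruct p as [x y].
  unfold unstraighten. rewrite wexp_straighten, Hk. simpl. f_equal. ring.
Qed.

Lemma straighten_unstraighten (k : R -> R) (q : R2) :
  k (wexp q) * exp (- k (wexp q)) = wexp q -> straighten (unstraighten k q) = q.
Proof.
  intros Hk. destruct q as [u v].
  unfold straighten, unstraighten, f, wexp in *; simpl in *. f_equal.
  replace (k (u * exp (- v)) - v + v) with (k (u * exp (- v))) by ring.
  replace (- (k (u * exp (- v)) - v)) with (- k (u * exp (- v)) + v) by ring.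
  rewrite exp_plus, <- Rmult_assoc, Hk, Rmult_assoc, <- exp_plus, Rplus_opp_l, exp_0.
  apply Rmult_1_r.
Qed.

Theorem mainTheorem1 : forall p0 : R2, D p0 -> linearizable_near p0.
Proof.
  intros [x0 y0] Hp0.
  destruct (sexp_local_inverse (x0 + y0) Hp0)
    as (a & b & c & d & k & Hs0 & Hne1 & Hmaps & Hk & Hk_inv & Hk_deriv).
  set (U := fun p : R2 => a < fst p + snd p < b).
  set (V := fun q : R2 => c < wexp q < d).
  exists U, V, straighten, (unstraighten k).
  split; [exact Hs0|]. split; [intros p Hp; exact (Hne1 _ Hp)|].
  split; [|apply straighten_leaves_on_lines].
  split; [|split; [|split; [|split; [|split; [|split; [|split]]]]]].
  - apply (open2_preimage_interval (fun p => fst p + snd p)). intros p.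
    apply (continuous_plus (fun q : R2 => fst q)); [apply continuous_fst_R2 | apply continuous_snd_R2].
  - apply open2_preimage_interval, continuous_wexp.
  - intros p Hp. unfold V. rewrite wexp_straighten. apply Hmaps, Hp.
  - intros q Hq. unfold U, unstraighten; simpl.
    replace (k (wexp q) - snd q + snd q) with (k (wexp q)) by ring. apply Hk, Hq.
  - intros p Hp. apply unstraighten_straighten, Hk_inv, Hp.
  - intros q Hq. apply straighten_unstraighten, Hk, Hq.
  - apply straighten_smooth.
  - apply unstraighten_smooth.
    + intros q Hq. apply Hne1, Hk, Hq.
    + intros q Hq. apply Hk_deriv, Hq.
Qed.
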